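(* Let $X$ be a $T_0$-space and consider: (1) $P_S(X)$ is $S^{\ast}$-well-filtered; (2) $P_S(X)$ is a $d^{\ast}$-space; (3) $X$ is $S^{\ast}$-well-filtered; (4) $X$ is weak well-filtered. Then $(1)\Rightarrow(2)\Rightarrow(3)\Rightarrow(4)$. Moreover, if $X$ is coherent (in particular, if $X$ is KC), then $(2)\Leftrightarrow(3)\Leftrightarrow(4)$.
   Context: For a space $X$, the specialization order is $x\le y$ iff $x\in cl\{y\}$; ${\uparrow}$ is taken with respect to it; saturated = upper set in this order. $K(X)$ is the set of nonempty compact saturated subsets of $X$; a family in $K(X)$ is filtered if any two members contain a common member. The Smyth power space $P_S(X)$ is $K(X)$ with the upper Vietoris topology, generated by the sets $\Box U=\{K\in K(X)\mid K\subseteq U\}$ for $U$ open in $X$; its specialization order is reverse inclusion. $X$ is weak well-filtered if for every filtered $\{K_i\}\subseteq K(X)$ and nonempty open $U$, $\bigcap_i K_i\subseteq U$ implies $K_i\subseteq U$ for some $i$. $X$ is $S^{\ast}$-well-filtered if for every filtered $\{K_i\}\subseteq K(X)$, $G\in K(X)$ and nonempty open $U$, $\bigcap_i K_i\cap G\subseteq U$ implies $K_i\cap G\subseteq U$ for some $i$. $X$ is a $d^{\ast}$-space if for every directed $D\subseteq X$, $x\in X$ and nonempty open $U$, $\bigcap_{d\in D}{\uparrow}d\cap{\uparrow}x\subseteq U$ implies ${\uparrow}d\cap{\uparrow}x\subseteq U$ for some $d\in D$. $X$ is coherent if the intersection of any two compact saturated sets is compact; $X$ is KC if every compact subset is closed.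 *)

Set Implicit Arguments.
From Stdlib Require Import List.

Definition is_topology (T : Type) (O : (T -> Prop) -> Prop) : Prop :=
  O (fun _ => True) /\
  (forall F : (T -> Prop) -> Prop, (forall U, F U -> O U) ->
      O (fun x => exists U, F U /\ U x)) /\
  (forall U V, O U -> O V -> O (fun x => U x /\ V x)).

Record space := Space {
  pt :> Type;
  opn : (pt -> Prop) -> Prop;
  opn_top : @is_topology pt opn
}.

Section Notions.
Variable X : space.

Definition subset (A B : X -> Prop) : Prop := forall x, A x -> B x.

Definition spec (x y : X) : Prop := forall U, opn X U -> U x -> U y.

Definition up (A : X -> Prop) : X -> Prop := fun y => exists x, A x /\ spec x y.
Definition up1 (x : X) : X -> Prop := fun y => spec x y.

Definition saturated (A : X -> Prop) : Prop :=
  forall x y, A x -> spec x y -> A y.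

Definition compact (A : X -> Prop) : Prop :=
  forall F : (X -> Prop) -> Prop, (forall U, F U -> opn X U) ->
    subset A (fun x => exists U, F U /\ U x) ->
    exists l : list (X -> Prop), (forall U, In U l -> F U) /\
      subset A (fun x => exists U, In U l /\ U x).

Definition closed (A : X -> Prop) : Prop := opn X (fun x => ~ A x).

Definition inK (A : X -> Prop) : Prop :=
  (exists x, A x) /\ compact A /\ saturated A.

Definition T0 : Prop := forall x y, spec x y -> spec y x -> x = y.

Definition filtered_K (I : Type) (K : I -> X -> Prop) : Prop :=
  inhabited I /\ (forall i, inK (K i)) /\
  (forall i j, exists k, subset (K k) (K i) /\ subset (K k) (K j)).

Definition nonempty_open (U : X -> Prop) : Prop := opn X U /\ exists x, U x.

Definition weak_well_filtered : Prop :=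
  forall (I : Type) (K : I -> X -> Prop) (U : X -> Prop),
    filtered_K K -> nonempty_open U ->
    subset (fun x => forall i, K i x) U -> exists i, subset (K i) U.

Definition S_star_well_filtered : Prop :=
  forall (I : Type) (K : I -> X -> Prop) (G U : X -> Prop),
    filtered_K K -> inK G -> nonempty_open U ->
    subset (fun x => (forall i, K i x) /\ G x) U ->
    exists i, subset (fun x => K i x /\ G x) U.

Definition directed (D : X -> Prop) : Prop :=
  (exists d, D d) /\
  (forall a b, D a -> D b -> exists c, D c /\ spec a c /\ spec b c).

Definition d_star_space : Prop :=
  forall (D : X -> Prop) (x : X) (U : X -> Prop),
    directed D -> nonempty_open U ->
    subset (fun y => (forall d, D d -> up1 d y) /\ up1 x y) U ->
    exists d, D d /\ subset (fun y => up1 d y /\ up1 x y) U.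

Definition coherent : Prop :=
  forall A B, compact A -> saturated A -> compact B -> saturated B ->
    compact (fun x => A x /\ B x).

Definition KC : Prop := forall A, compact A -> closed A.

End Notions.

Definition generated (T : Type) (S : (T -> Prop) -> Prop) : (T -> Prop) -> Prop :=
  fun W => forall O, is_topology O -> (forall U, S U -> O U) -> O W.

Lemma generated_top (T : Type) (S : (T -> Prop) -> Prop) :
  is_topology (generated S).
Proof.
  split; [|split].
  - intros O [H _] _; exact H.
  - intros F HF O HO HS. destruct HO as [H1 [H2 H3]].
    apply H2. intros U FU. apply (HF U FU O); [split; [|split]|]; assumption.
  - intros U V HU HV O HO HS. pose proof HO as [H1 [H2 H3]].
    apply H3; [apply HU|apply HV]; assumption.
Qed.

Definition KX (X : space) : Type := { A : X -> Prop | @inK X A }.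

Definition Box (X : space) (U : X -> Prop) : KX X -> Prop :=
  fun K => @subset X (proj1_sig K) U.

Definition upper_vietoris (X : space) : (KX X -> Prop) -> Prop :=
  generated (fun W => exists U, opn X U /\ W = @Box X U).

Definition PS (X : space) : space :=
  @Space (KX X) (@upper_vietoris X) (@generated_top _ _).

(* The specialization order of P_S(X) is reverse inclusion, so a directed
   family in P_S(X) is exactly a filtered family in K(X), and a principal
   filter (up x) is a compact saturated set. This makes S*-well-filteredness
   of any space imply the d*-property, and turns the d*-property of P_S(X)
   into S*-well-filteredness of X (test on the elements (up y), y in the
   relevant intersection). Taking G to be a member of the family gives weak
   well-filteredness. For coherent X, the sets K_i /\ G are again in K(X) and
   form a filtered family, which gives the converse (4) => (3); and S*-well-
   filteredness makes the intersection of K_i with G compact, so it is the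
   infimum of the family in P_S(X), which gives (3) => (2). KC spaces are
   coherent because A /\ B is covered by a cover of A together with the open
   complement of B. *)
From Stdlib Require Import List Classical.

Set Implicit Arguments.

Section SpaceFacts.
Variable X : space.

Lemma opn_full : opn X (fun _ => True).
Proof. exact (proj1 (opn_top X)). Qed.

Lemma opn_union (F : (X -> Prop) -> Prop) :
  (forall U, F U -> opn X U) -> opn X (fun x => exists U, F U /\ U x).
Proof. exact (proj1 (proj2 (opn_top X)) F). Qed.

Lemma opn_inter (U V : X -> Prop) :
  opn X U -> opn X V -> opn X (fun x => U x /\ V x).
Proof. exact (proj2 (proj2 (opn_top X)) U V). Qed.

Lemma up1_inK (y : X) : inK X (up1 X y).
Proof.
  split; [|split].
  - exists y. intros U _ Uy; exact Uy.
  - intros F HF Hcov. destruct (Hcov y (fun U _ Uy => Uy)) as [U [FU Uy]].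
    exists (U :: nil). split.
    + intros V [<-|[]]; exact FU.
    + intros z yz. exists U. split; [left; reflexivity|]. exact (yz U (HF U FU) Uy).
  - intros a b ya ab U HU Uy. exact (ab U HU (ya U HU Uy)).
Qed.

Lemma saturated_meet (I : Type) (K : I -> X -> Prop) (G : X -> Prop) :
  (forall i, saturated X (K i)) -> saturated X G ->
  saturated X (fun x => (forall i, K i x) /\ G x).
Proof.
  intros HK HG a b [Ka Ga] ab. split.
  - intros i. exact (HK i a b (Ka i) ab).
  - exact (HG a b Ga ab).
Qed.

Lemma inK_inter (A B : X -> Prop) : coherent X -> inK X A -> inK X B ->
  (exists x, A x /\ B x) -> inK X (fun x => A x /\ B x).
Proof.
  intros Hco [_ [Ac As]] [_ [Bc Bs]] Hne. split; [exact Hne|]. split.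
  - exact (Hco A B Ac As Bc Bs).
  - intros a b [Aa Ba] ab. exact (conj (As a b Aa ab) (Bs a b Ba ab)).
Qed.

Lemma directed_filtered_up1 (D : X -> Prop) :
  directed X D -> filtered_K X (fun p : {d | D d} => up1 X (proj1_sig p)).
Proof.
  intros [[d0 Dd0] Hdir]. split; [constructor; exact (exist _ d0 Dd0)|]. split.
  - intros p. apply up1_inK.
  - intros [a Da] [b Db]. destruct (Hdir a b Da Db) as [c [Dc [ac bc]]].
    exists (exist _ c Dc); simpl.
    split; intros z cz U HU Ua; apply (cz U HU); [apply (ac U HU) | apply (bc U HU)]; exact Ua.
Qed.

End SpaceFacts.

Lemma Swf_dstar (Y : space) : S_star_well_filtered Y -> d_star_space Y.
Proof.
  intros Hswf D x U HD HU Hsub.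
  destruct (Hswf _ _ (up1 Y x) U (directed_filtered_up1 HD) (up1_inK Y x) HU)
    as [[d Dd] Hd].
  - intros y [Hy xy]. apply Hsub. split; [|exact xy].
    intros d Dd. exact (Hy (exist _ d Dd)).
  - exists d. split; [exact Dd | exact Hd].
Qed.

Lemma Swf_wwf (X : space) : S_star_well_filtered X -> weak_well_filtered X.
Proof.
  intros Hswf I K U Hf HU Hsub. pose proof Hf as [[i0] [HK Hfil]].
  destruct (Hswf I K (K i0) U Hf (HK i0) HU) as [i Hi].
  - intros x [Kx _]. exact (Hsub x Kx).
  - destruct (Hfil i i0) as [k [ki ki0]]. exists k.
    intros x Kx. apply Hi. split; [apply ki | apply ki0]; exact Kx.
Qed.

Lemma wwf_Swf (X : space) :
  coherent X -> weak_well_filtered X -> S_star_well_filtered X.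
Proof.
  intros Hco Hwwf I K G U [[i0] [HK Hfil]] HG HU Hsub.
  destruct (classic (exists i, forall x, ~ (K i x /\ G x))) as [[i Hi]|Hmeet].
  { exists i. intros x Hx. destruct (Hi x Hx). }
  apply (Hwwf I (fun i x => K i x /\ G x) U); [split; [constructor; exact i0|split] | exact HU |].
  - intros i. apply inK_inter; [exact Hco | apply HK | exact HG |].
    apply NNPP. intros Hempty. apply Hmeet. exists i. intros x Hx. apply Hempty. exists x; exact Hx.
  - intros i j. destruct (Hfil i j) as [k [ki kj]]. exists k.
    split; intros x [Kx Gx]; split; auto.
  - intros x Hx. apply Hsub. split; [intros i; apply (Hx i) | apply (Hx i0)].
Qed.

Section SmythPowerSpace.
Variable X : space.

Definition upK (x : X) : KX X := exist _ (up1 X x) (up1_inK X x).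

Lemma Box_open (U : X -> Prop) : opn X U -> opn (PS X) (Box U).
Proof. intros HU O _ HS. apply HS. exists U. split; [exact HU | reflexivity]. Qed.

Lemma PS_opn_ind (P : (KX X -> Prop) -> Prop) :
  is_topology P -> (forall U, opn X U -> P (Box U)) ->
  forall W, opn (PS X) W -> P W.
Proof. intros HP HB W HW. apply HW; [exact HP|]. intros _ [U [HU ->]]. exact (HB U HU). Qed.

Lemma spec_PS_of_subset (A B : KX X) :
  subset X (proj1_sig B) (proj1_sig A) -> spec (PS X) A B.
Proof.
  intros BA W HW. revert A B BA.
  apply (PS_opn_ind (P := fun W => forall A B : KX X,
           subset X (proj1_sig B) (proj1_sig A) -> W A -> W B)); [split; [|split]| |exact HW].
  - intros; exact I.
  - intros F HF A B BA [V [FV VA]]. exists V. split; [exact FV | exact (HF V FV A B BA VA)].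
  - intros V1 V2 H1 H2 A B BA [V1A V2A]. split; [exact (H1 A B BA V1A) | exact (H2 A B BA V2A)].
  - intros U _ A B BA AU x Bx. exact (AU x (BA x Bx)).
Qed.

(* A member of K(X) is saturated, so any point outside it has an open
   neighbourhood of the member that misses that point. *)
Lemma subset_of_spec_PS (A B : KX X) :
  spec (PS X) A B -> subset X (proj1_sig B) (proj1_sig A).
Proof.
  intros AB y By. apply NNPP. intros nAy.
  set (V := fun z => exists W, (opn X W /\ ~ W y) /\ W z).
  assert (HV : opn X V) by (apply opn_union; intros W [HW _]; exact HW).
  assert (AV : Box V A).
  { intros x Ax. destruct (proj2_sig A) as [_ [_ Asat]].
    apply NNPP. intros nVx. apply nAy. apply (Asat x y Ax).
    intros W HW Wx. apply NNPP. intros nWy. apply nVx. exists W. auto. }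
  destruct (AB (Box V) (Box_open V HV) AV y By) as [W [[_ nWy] Wy]].
  exact (nWy Wy).
Qed.

Lemma spec_PS (A B : KX X) :
  spec (PS X) A B <-> subset X (proj1_sig B) (proj1_sig A).
Proof. split; [apply subset_of_spec_PS | apply spec_PS_of_subset]. Qed.

Lemma PS_open_basis (W : KX X -> Prop) : opn (PS X) W ->
  forall A, W A -> exists U, opn X U /\ Box U A /\ forall B, Box U B -> W B.
Proof.
  revert W.
  apply (PS_opn_ind (P := fun W => forall A, W A ->
           exists U, opn X U /\ Box U A /\ forall B, Box U B -> W B));
    [split; [|split]|].
  - intros A _. exists (fun _ => True).
    split; [apply opn_full | split; repeat intro; exact I].
  - intros F HF A [W0 [FW0 W0A]]. destruct (HF W0 FW0 A W0A) as [U [HU [AU HUW]]].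
    exists U. split; [exact HU|split; [exact AU|]].
    intros B UB. exists W0. split; [exact FW0 | exact (HUW B UB)].
  - intros W1 W2 H1 H2 A [W1A W2A].
    destruct (H1 A W1A) as [U1 [HU1 [AU1 HU1W]]].
    destruct (H2 A W2A) as [U2 [HU2 [AU2 HU2W]]].
    exists (fun x => U1 x /\ U2 x). split; [apply opn_inter; assumption|split].
    + intros x Ax. split; [apply AU1 | apply AU2]; exact Ax.
    + intros B UB. split; [apply HU1W | apply HU2W]; intros x Bx; apply (UB x Bx).
  - intros U HU A AU. exists U. auto.
Qed.

Lemma Box_nonempty_open (U : X -> Prop) :
  nonempty_open X U -> nonempty_open (PS X) (Box U).
Proof.
  intros [HU [u Uu]]. split; [exact (Box_open U HU)|].
  exists (upK u). intros z uz. exact (uz U HU Uu).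
Qed.

Lemma filtered_directed_PS (I : Type) (K : I -> X -> Prop) (Hf : filtered_K X K) :
  directed (PS X) (fun A : KX X => exists i, proj1_sig A = K i).
Proof.
  destruct Hf as [[i0] [HK Hfil]]. split.
  - exists (exist _ (K i0) (HK i0)). exists i0. reflexivity.
  - intros A B [i Ai] [j Bj]. destruct (Hfil i j) as [k [ki kj]].
    exists (exist _ (K k) (HK k)). split; [exists k; reflexivity|].
    split; apply spec_PS; simpl; [rewrite Ai | rewrite Bj]; assumption.
Qed.

Lemma directed_PS_filtered (D : KX X -> Prop) : directed (PS X) D ->
  filtered_K X (fun p : {A | D A} => proj1_sig (proj1_sig p)).
Proof.
  intros [[d0 Dd0] Hdir]. split; [constructor; exact (exist _ d0 Dd0)|]. split.
  - intros p. exact (proj2_sig (proj1_sig p)).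
  - intros [a Da] [b Db]. destruct (Hdir a b Da Db) as [c [Dc [ac bc]]].
    exists (exist _ c Dc); simpl. split; apply spec_PS; assumption.
Qed.

(* Test the d*-property on the elements (up y) with y in K_i /\ G. *)
Lemma dstar_PS_Swf : d_star_space (PS X) -> S_star_well_filtered X.
Proof.
  intros Hdstar I K G U Hf HG HU Hsub. pose proof Hf as [_ [HK _]].
  destruct (Hdstar _ (exist _ G HG) (Box U) (filtered_directed_PS Hf)
              (Box_nonempty_open HU)) as [A [[i Ai] HA]].
  - intros B [BD BG] y By. apply Hsub. split.
    + intros i. exact (proj1 (spec_PS _ _) (BD (exist _ (K i) (HK i)) (ex_intro _ i eq_refl)) y By).
    + exact (proj1 (spec_PS _ _) BG y By).
  - exists i. intros y [Ky Gy].
    assert (UupK : Box U (upK y)).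
    { apply HA. split; apply spec_PS; simpl; intros z yz.
      - rewrite Ai. destruct (HK i) as [_ [_ Ksat]]. exact (Ksat y z Ky yz).
      - pose proof HG as [_ [_ Gsat]]. exact (Gsat y z Gy yz). }
    apply UupK. intros V _ Vy; exact Vy.
Qed.

Section Coherent.
Hypothesis Hco : coherent X.
Hypothesis Hswf : S_star_well_filtered X.

(* A cover of the intersection already covers some K_i /\ G, which is compact
   by coherence. *)
Lemma Swf_compact_meet (I : Type) (K : I -> X -> Prop) (G : X -> Prop) :
  filtered_K X K -> inK X G -> compact X (fun x => (forall i, K i x) /\ G x).
Proof.
  intros Hf HG F HF Hcov.
  destruct (classic (exists x, exists U, F U /\ U x)) as [Hne|Hempty].
  - destruct (Hswf Hf HG (conj (opn_union X F HF) Hne) Hcov) as [i Hi].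
    destruct Hf as [_ [HK _]]. destruct (HK i) as [_ [Kc Ks]]. destruct HG as [_ [Gc Gs]].
    destruct (Hco Kc Ks Gc Gs F HF Hi) as [l [Hl Hcovl]].
    exists l. split; [exact Hl|]. intros x [Kx Gx]. exact (Hcovl x (conj (Kx i) Gx)).
  - exists nil. split; [intros U []|].
    intros x Hx. destruct (Hempty (ex_intro _ x (Hcov x Hx))).
Qed.

Lemma Swf_meet_inK (I : Type) (K : I -> X -> Prop) (G : X -> Prop) :
  filtered_K X K -> inK X G -> (exists x, (forall i, K i x) /\ G x) ->
  inK X (fun x => (forall i, K i x) /\ G x).
Proof.
  intros Hf HG Hne. split; [exact Hne | split].
  - exact (Swf_compact_meet Hf HG).
  - destruct Hf as [_ [HK _]]. apply saturated_meet.
    + intros i. exact (proj2 (proj2 (HK i))).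
    + exact (proj2 (proj2 HG)).
Qed.

(* The intersection of the d in D with G is their infimum in P_S(X) (when
   nonempty), so one basic open Box U around it lies in W. *)
Lemma Swf_dstar_PS : d_star_space (PS X).
Proof.
  intros D G W HD [HW [A0 WA0]] Hsub.
  pose proof (directed_PS_filtered HD) as Hf.
  set (K := fun p : {A | D A} => proj1_sig (proj1_sig p)) in Hf.
  set (meet := fun x => (forall p, K p x) /\ proj1_sig G x).
  assert (HU : exists U, nonempty_open X U /\ subset X meet U /\
                          forall B, Box U B -> W B).
  { destruct (classic (exists x, meet x)) as [Hne|Hempty].
    - pose proof (Swf_meet_inK Hf (proj2_sig G) Hne) as Hmeet.
      assert (Wmeet : W (exist _ meet Hmeet)).
      { apply Hsub. split.
        - intros d Dd. apply spec_PS. intros x [Kx _]. exact (Kx (exist _ d Dd)).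
        - apply spec_PS. intros x [_ Gx]. exact Gx. }
      destruct (PS_open_basis HW _ Wmeet) as [U [HU [meetU HUW]]].
      destruct Hne as [x0 Hx0].
      exists U. split; [split; [exact HU | exists x0; exact (meetU x0 Hx0)]|auto].
    - destruct (PS_open_basis HW _ WA0) as [U [HU [A0U HUW]]].
      destruct (proj2_sig A0) as [[y A0y] _].
      exists U. split; [split; [exact HU | exists y; exact (A0U y A0y)]|split; [|exact HUW]].
      intros x Hx. destruct (Hempty (ex_intro _ x Hx)). }
  destruct HU as [U [HU [meetU HUW]]].
  destruct (Hswf Hf (proj2_sig G) HU meetU) as [[d Dd] Hd].
  exists d. split; [exact Dd|].
  intros B [dB GB]. apply HUW. intros y By. apply Hd.
  split; [exact (proj1 (spec_PS _ _) dB y By) | exact (proj1 (spec_PS _ _) GB y By)].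
Qed.

End Coherent.
End SmythPowerSpace.

Lemma list_remove_member (T : Type) (F : (T -> Prop) -> Prop) (N : T -> Prop)
    (l : list (T -> Prop)) :
  (forall U, In U l -> F U \/ U = N) ->
  exists l', (forall U, In U l' -> F U) /\
    forall x, (exists U, In U l /\ U x) -> ~ N x -> exists U, In U l' /\ U x.
Proof.
  induction l as [|a l IH]; intros Hl.
  - exists nil. split; [intros U []|]. intros x [U [[] _]].
  - destruct IH as [l' [Hl' Hcov]]; [intros U HU; apply Hl; right; exact HU|].
    destruct (Hl a (or_introl eq_refl)) as [Fa| ->].
    + exists (a :: l'). split; [intros U [<-|HU]; auto|].
      intros x [U [[<-|HU] Ux]] nNx; [exists a; split; [left|]; auto|].
      destruct (Hcov x (ex_intro _ U (conj HU Ux)) nNx) as [V [HV Vx]].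
      exists V. split; [right|]; auto.
    + exists l'. split; [exact Hl'|].
      intros x [U [[<-|HU] Ux]] nNx; [contradiction|].
      exact (Hcov x (ex_intro _ U (conj HU Ux)) nNx).
Qed.

Lemma KC_coherent (X : space) : KC X -> coherent X.
Proof.
  intros HKC A B Ac _ Bc _ F HF Hcov.
  destruct (Ac (fun U => F U \/ U = (fun x => ~ B x))) as [l [Hl Hcovl]].
  - intros U [FU| ->]; [exact (HF U FU) | exact (HKC B Bc)].
  - intros x Ax. destruct (classic (B x)) as [Bx|nBx].
    + destruct (Hcov x (conj Ax Bx)) as [U [FU Ux]]. exists U; auto.
    + exists (fun x => ~ B x). auto.
  - destruct (list_remove_member F l Hl) as [l' [Hl' Hcov']].
    exists l'. split; [exact Hl'|]. intros x [Ax Bx]. exact (Hcov' x (Hcovl x Ax) (fun n => n Bx)).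
Qed.

Theorem mainTheorem20 (X : space) (hT0 : T0 X) :
  (S_star_well_filtered (PS X) -> d_star_space (PS X)) /\
  (d_star_space (PS X) -> S_star_well_filtered X) /\
  (S_star_well_filtered X -> weak_well_filtered X) /\
  (coherent X \/ KC X ->
     (d_star_space (PS X) <-> S_star_well_filtered X) /\
     (S_star_well_filtered X <-> weak_well_filtered X)).
Proof.
  split; [apply Swf_dstar|].
  split; [apply dstar_PS_Swf|].
  split; [apply Swf_wwf|].
  intros Hc.
  assert (Hco : coherent X) by (destruct Hc as [Hco|HKC]; [exact Hco | exact (KC_coherent HKC)]).
  split; split.
  - apply dstar_PS_Swf.
  - intros Hswf. exact (Swf_dstar_PS Hco Hswf).
  - apply Swf_wwf.
  - apply wwf_Swf, Hco.
Qed.
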